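(* Let $\mathbf{X}$ be a good sgrm and $\mathbf{W}$ an $N$-sgrm over $\mathbb{R}^d$ on $[0,T]$, and let $v=(v_1,\dots,v_d)$ with $v_i\in\mathcal{L}(\mathbb{R}^d)$. Then a path $Y:[0,T]\to\mathbb{R}^e$ solves $$dY=f(Y)\,d(T_v(\mathbf{X}))\qquad\text{resp.}\qquad dY=f(Y)\,d(\mathcal{T}_v[\mathbf{W}])$$ if and only if it solves $$dY=f^v(Y)\,d\mathbf{X}\qquad\text{resp.}\qquad dY=f^v(Y)\,d\mathbf{W}.$$
   Context: Fix $T>0$, $d,e\ge1$. $T((\mathbb{R}^d))$: formal tensor series over words in $\{1,\dots,d\}$ (incl. empty word, unit $\mathbf{1}$), concatenation $\otimes$, $\langle\mathbf{x},w\rangle$ coefficient of $w$; $T^N(\mathbb{R}^d)$: span of words of length $\le N$ with truncated product $\otimes_N$, projection $\mathrm{proj}_N$. Shuffle: bilinear, unit $\mathbf{1}$, $wi\sqcup\!\sqcup vj=(w\sqcup\!\sqcup vj)i+(wi\sqcup\!\sqcup v)j$. $\mathcal{L}(\mathbb{R}^d)$: Lie polynomials generated by the letters; $\mathcal{L}^N(\mathbb{R}^d)=\mathrm{proj}_N\mathcal{L}(\mathbb{R}^d)$. $N$-sgrm: non-zero $\mathbf{X}:[0,T]^2\to T^N(\mathbb{R}^d)$ with $\langle\mathbf{X}_{s,t},u\sqcup\!\sqcup w\rangle=\langle\mathbf{X}_{s,t},u\rangle\langle\mathbf{X}_{s,t},w\rangle$ ($|u|+|w|\le N$), $\mathbf{X}_{s,u}\otimes_N\mathbf{X}_{u,t}=\mathbf{X}_{s,t}$,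 smooth $t\mapsto\langle\mathbf{X}_{s,t},w\rangle$; sgrm: same in $T((\mathbb{R}^d))$ with $\otimes$ and all words. Diagonal derivative $\dot{\mathbf{X}}_{s,s}=\partial_t|_{t=s}\mathbf{X}_{s,t}$. $\mathrm{MinExt}(\mathbf{Y})$ of an $N$-sgrm $\mathbf{Y}$: the unique sgrm agreeing with $\mathbf{Y}$ on words of length $\le N$ with diagonal derivative in $\mathcal{L}^N(\mathbb{R}^d)$; good sgrm: $\mathrm{MinExt}(\mathbf{Y})$ for some $N$-sgrm $\mathbf{Y}$ (then its diagonal derivative lies in some $\mathcal{L}^K(\mathbb{R}^d)$ for all times). Translation: $T_v$ is the $\otimes$-algebra endomorphism of $T((\mathbb{R}^d))$ (continuous coordinatewise) with $e_i\mapsto e_i+v_i$; $T_v(\mathbf{X})_{s,t}:=T_v(\mathbf{X}_{s,t})$ (a good sgrm). With $N'$ the smallest integer such that $v_i\in\mathcal{L}^{N'}(\mathbb{R}^d)$ for all $i$ and $M=NN'$, $\mathcal{T}_v[\mathbf{W}]$ is the $M$-sgrm $\mathcal{T}_v[\mathbf{W}]_{s,t}:=\mathrm{proj}_MT_v(\mathrm{MinExt}(\mathbf{W})_{s,t})$. Vector fields: $f_1,\dots,f_d$ smooth on $\mathbb{R}^e$ with bounded derivatives; $g\vartriangleright h:=g^i(\partial_ih^j)\partial_j$; $f_{\mathbf{1}}=\mathrm{id}$, $f_{\ell_1\cdots\ell_n}:=f_{\ell_1}\vartriangleright(\cdots\vartriangleright(f_{\ell_{n-1}}\vartriangleright f_{\ell_n})\cdots)$,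 $f_{\mathbf{x}}:=\sum_w\langle\mathbf{x},w\rangle f_w$ for $\mathbf{x}\in T(\mathbb{R}^d)$. $f^v_i:=f_i+f_{v_i}$, and $f^v_w$ is built from $(f^v_1,\dots,f^v_d)$ by the same iterated $\vartriangleright$ formula. For $\mathbf{X}$ an $K$-sgrm or a good sgrm with $\dot{\mathbf{X}}_{s,s}\in\mathcal{L}^K(\mathbb{R}^d)$ for all $s$, and a family $g$ of this type, ''$Y$ solves $dY=g(Y)d\mathbf{X}$'' means $Y$ is smooth with $\dot Y_s=\sum_{|w|\le K}g_w(Y_s)\langle\dot{\mathbf{X}}_{s,s},w\rangle$ for all $s$. *)

From Stdlib Require Import Reals.
From Coquelicot Require Import Coquelicot.
From mathcomp Require Import all_boot.

Set Implicit Arguments.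
Unset Strict Implicit.
Unset Printing Implicit Defensive.

Local Open Scope R_scope.

Definition Rsum {A : Type} (s : seq A) (F : A -> R) : R :=
  foldr (fun a acc => F a + acc) 0 s.

(* A word over {1..d} is a seq 'I_d; an element of T((R^d)) is its
   coefficient function <x, w>. *)
Definition tensor (d : nat) := seq 'I_d -> R.

Fixpoint words_len (d n : nat) : seq (seq 'I_d) :=
  match n with
  | 0 => [:: [::]]
  | n'.+1 => [seq i :: w | i <- enum 'I_d, w <- words_len d n']
  end.

Definition words_upto (d n : nat) : seq (seq 'I_d) :=
  flatten [seq words_len d k | k <- iota 0%N n.+1].

Definition tone {d} : tensor d := fun w => if w is [::] then 1 else 0.
Definition letter {d} (i : 'I_d) : tensor d :=
  fun w => if w == [:: i] then 1 else 0.
Definition tadd {d} (x y : tensor d) : tensor d := fun w => x w + y w.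
Definition tscale {d} (c : R) (x : tensor d) : tensor d := fun w => c * x w.

Definition tmul {d} (x y : tensor d) : tensor d :=
  fun w => Rsum (iota 0%N (size w).+1) (fun k => x (take k w) * y (drop k w)).

Definition tbracket {d} (x y : tensor d) : tensor d :=
  fun w => tmul x y w - tmul y x w.

Definition tproj {d} (N : nat) (x : tensor d) : tensor d :=
  fun w => if (size w <= N)%N then x w else 0.

(* shuffle of reversed words with the left-recursion; after reversing back
   this is exactly the recursion wi sh vj = (w sh vj) i + (wi sh v) j,
   with unit the empty word.  The result is the multiset of words (as a list). *)
Fixpoint shl {I : Type} (u : seq I) : seq I -> seq (seq I) :=
  match u with
  | [::] => fun v => [:: v]
  | a :: u' =>
      fix g (v : seq I) : seq (seq I) :=
        match v with
        | [::] => [:: a :: u']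
        | b :: v' => map (cons a) (shl u' v) ++ map (cons b) (g v')
        end
  end.

Definition shuffle {I : Type} (u v : seq I) : seq (seq I) :=
  map rev (shl (rev u) (rev v)).

Definition tpair_shuffle {d} (x : tensor d) (u v : seq 'I_d) : R :=
  Rsum (shuffle u v) x.

Inductive is_lie {d} : tensor d -> Prop :=
  | lie_letter (i : 'I_d) : is_lie (letter i)
  | lie_add (p q : tensor d) : is_lie p -> is_lie q -> is_lie (tadd p q)
  | lie_scale (c : R) (p : tensor d) : is_lie p -> is_lie (tscale c p)
  | lie_bracket (p q : tensor d) : is_lie p -> is_lie q -> is_lie (tbracket p q)
  | lie_ext (p q : tensor d) : (forall w, p w = q w) -> is_lie p -> is_lie q.

Definition in_LN {d} (N : nat) (x : tensor d) : Prop :=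
  exists l, is_lie l /\ forall w, x w = tproj N l w.

Definition in0T (T t : R) : Prop := 0 <= t <= T.

Definition deriv_within (T : R) (g : R -> R) (s l : R) : Prop :=
  forall eps : R, 0 < eps -> exists delta : R, 0 < delta /\
    forall t, in0T T t -> t <> s -> Rabs (t - s) < delta ->
      Rabs ((g t - g s) / (t - s) - l) < eps.

Definition smooth_on (T : R) (g : R -> R) : Prop :=
  exists G : R -> R, (forall n x, ex_derive_n G n x) /\
    (forall t, in0T T t -> G t = g t).

Definition twopar (d : nat) := R -> R -> tensor d.

Definition is_Nsgrm {d} (T : R) (N : nat) (X : twopar d) : Prop :=
  (forall s t w, in0T T s -> in0T T t -> (N < size w)%N -> X s t w = 0) /\
  (exists s t w, in0T T s /\ in0T T t /\ X s t w <> 0) /\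
  (forall s t (u w : seq 'I_d), in0T T s -> in0T T t ->
      (size u + size w <= N)%N ->
      tpair_shuffle (X s t) u w = X s t u * X s t w) /\
  (forall s u t w, in0T T s -> in0T T u -> in0T T t -> (size w <= N)%N ->
      tmul (X s u) (X u t) w = X s t w) /\
  (forall s w, in0T T s -> smooth_on T (fun t => X s t w)).

Definition is_sgrm {d} (T : R) (X : twopar d) : Prop :=
  (exists s t w, in0T T s /\ in0T T t /\ X s t w <> 0) /\
  (forall s t (u w : seq 'I_d), in0T T s -> in0T T t ->
      tpair_shuffle (X s t) u w = X s t u * X s t w) /\
  (forall s u t w, in0T T s -> in0T T u -> in0T T t ->
      tmul (X s u) (X u t) w = X s t w) /\
  (forall s w, in0T T s -> smooth_on T (fun t => X s t w)).

Definition is_diag_deriv {d} (T : R) (X : twopar d) (s : R) (D : tensor d) : Prop :=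
  forall w, deriv_within T (fun t => X s t w) s (D w).

Definition is_MinExt {d} (T : R) (N : nat) (W X : twopar d) : Prop :=
  is_sgrm T X /\
  (forall s t w, in0T T s -> in0T T t -> (size w <= N)%N -> X s t w = W s t w) /\
  (forall s D, in0T T s -> is_diag_deriv T X s D -> in_LN N D).

Definition is_good_sgrm {d} (T : R) (X : twopar d) : Prop :=
  exists (N : nat) (W : twopar d), is_Nsgrm T N W /\ is_MinExt T N W X.

Definition tprod {d} (xs : seq (tensor d)) : tensor d := foldr tmul tone xs.

(* T_v(x): the (coordinatewise continuous) algebra endomorphism with
   e_i |-> e_i + v_i, i.e. sum_w <x,w> (e_{w1}+v_{w1}) (x) ... (x) (e_{wn}+v_{wn}).
   Since e_i + v_i has no constant term (v_i Lie), only words w with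
   |w| <= |u| contribute to the coefficient of u. *)
Definition translate_t {d} (v : 'I_d -> tensor d) (x : tensor d) : tensor d :=
  fun u => Rsum (words_upto d (size u))
             (fun w => x w * tprod [seq tadd (letter i) (v i) | i <- w] u).

Definition translate {d} (v : 'I_d -> tensor d) (X : twopar d) : twopar d :=
  fun s t => translate_t v (X s t).

(* \mathcal{T}_v[W]_{s,t} = proj_M T_v(MinExt(W)_{s,t}); here Xm = MinExt(W) *)
Definition calT {d} (v : 'I_d -> tensor d) (M : nat) (Xm : twopar d) : twopar d :=
  fun s t => tproj M (translate_t v (Xm s t)).

Definition point (e : nat) := 'I_e -> R.
Definition VF (e : nat) := point e -> point e.

Definition shift {e} (y : point e) (i : 'I_e) (t : R) : point e :=
  fun k => if k == i then y k + t else y k.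

Definition pd {e} (i : 'I_e) (h : point e -> R) : point e -> R :=
  fun y => Derive (fun t => h (shift y i t)) 0.

Definition iter_pd {e} (l : seq 'I_e) (h : point e -> R) : point e -> R :=
  foldr pd h l.

Definition continuous_Re {e} (F : point e -> R) : Prop :=
  forall y eps, 0 < eps -> exists delta, 0 < delta /\
    forall z, (forall k, Rabs (z k - y k) < delta) -> Rabs (F z - F y) < eps.

Definition smooth_bdd_field {e} (g : VF e) : Prop :=
  forall (l : seq 'I_e) (j : 'I_e),
    continuous_Re (iter_pd l (fun y => g y j)) /\
    (forall i y, ex_derive (fun t => iter_pd l (fun z => g z j) (shift y i t)) 0) /\
    (l <> [::] -> exists C, forall y, Rabs (iter_pd l (fun z => g z j) y) <= C).

Definition tri {e} (g h : VF e) : VF e :=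
  fun y j => Rsum (enum 'I_e) (fun i => g y i * pd i (fun z => h z j) y).

Fixpoint fw {d e} (g : 'I_d -> VF e) (w : seq 'I_d) : VF e :=
  match w with
  | [::] => fun y => y
  | l :: w' => match w' with
               | [::] => g l
               | _ => tri (g l) (fw g w')
               end
  end.

Definition fpoly {d e} (g : 'I_d -> VF e) (n : nat) (x : tensor d) : VF e :=
  fun y j => Rsum (words_upto d n) (fun w => x w * fw g w y j).

Definition fv {d e} (f : 'I_d -> VF e) (v : 'I_d -> tensor d) (N' : nat)
  : 'I_d -> VF e :=
  fun i y j => f i y j + fpoly f N' (v i) y j.

Definition solves_K {d e} (T : R) (K : nat) (g : 'I_d -> VF e) (X : twopar d)
  (Y : R -> point e) : Prop :=
  (forall j, smooth_on T (fun t => Y t j)) /\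
  forall s, in0T T s -> exists D, is_diag_deriv T X s D /\
    forall j, deriv_within T (fun t => Y t j) s
      (Rsum (words_upto d K) (fun w => fw g w (Y s) j * D w)).

Definition solves_good {d e} (T : R) (g : 'I_d -> VF e) (X : twopar d)
  (Y : R -> point e) : Prop :=
  exists K : nat,
    (forall s D, in0T T s -> is_diag_deriv T X s D -> in_LN K D) /\
    solves_K T K g X Y.

From HB Require Import structures.
From Stdlib Require Import Reals Lra Psatz FunctionalExtensionality Classical IndefiniteDescription.
From Coquelicot Require Import Coquelicot.
From mathcomp Require Import all_boot.

Set Implicit Arguments.
Unset Strict Implicit.
Unset Printing Implicit Defensive.
Local Open Scope R_scope.

(* A tensor [x] acts on smooth functions on R^e as the differential operator [diffop f n x]
   that sends each letter [e_i] to the derivation along [f_i] and concatenation to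
   composition.  For a Lie element this operator is again the derivation along a vector
   field, since the commutator of two vector fields is one (symmetry of second derivatives).
   Hence [T_v(e_i) = e_i + v_i] acts as the derivation along [f_i + f_(v_i) = f^v_i], and
   [T_v(e_w)] as the composite [f^v_w]; pairing with a truncated tensor [D] gives
     sum_u f_u <T_v(D), u> = sum_w f^v_w <D, w>.
   The diagonal derivative of [T_v(X)], resp. of [\mathcal T_v[W]], is [T_v] applied to that
   of [X], resp. of [MinExt W] (which is also that of [W]), so both equations have the same
   right-hand side at every time. *)

(** * Finite sums *)

HB.instance Definition _ := Monoid.isComLaw.Build R 0 Rplus
  (fun x y z => esym (Rplus_assoc x y z)) Rplus_comm Rplus_0_l.
HB.instance Definition _ := Monoid.isMulLaw.Build R 0 Rmult Rmult_0_l Rmult_0_r.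
HB.instance Definition _ := Monoid.isAddLaw.Build R Rmult Rplus
  Rmult_plus_distr_r Rmult_plus_distr_l.

Lemma RsumE {A : Type} (s : seq A) (F : A -> R) : Rsum s F = \big[Rplus/0]_(a <- s) F a.
Proof. by elim: s => [|a s IH]; rewrite ?big_nil ?big_cons //= -IH. Qed.

Section FiniteSums.
Variable A : Type.
Implicit Types (s : seq A) (F G : A -> R).

Lemma Rsum_cons a s F : Rsum (a :: s) F = F a + Rsum s F.
Proof. by []. Qed.

Lemma Rsum_cat s1 s2 F : Rsum (s1 ++ s2) F = Rsum s1 F + Rsum s2 F.
Proof. by rewrite !RsumE big_cat. Qed.

Lemma eq_Rsum s F G : (forall a, F a = G a) -> Rsum s F = Rsum s G.
Proof. by move=> FG; rewrite !RsumE; apply: eq_bigr => a _. Qed.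

Lemma Rsum_split s F G : Rsum s (fun a => F a + G a) = Rsum s F + Rsum s G.
Proof. by rewrite !RsumE big_split. Qed.

Lemma Rsum_sub s F G : Rsum s (fun a => F a - G a) = Rsum s F - Rsum s G.
Proof. by elim: s => [|a s IH] /=; [lra | rewrite IH; lra]. Qed.

Lemma Rsum_distrr s c F : Rsum s (fun a => c * F a) = c * Rsum s F.
Proof. by rewrite !RsumE big_distrr. Qed.

Lemma Rsum_distrl s c F : Rsum s (fun a => F a * c) = Rsum s F * c.
Proof. by rewrite !RsumE big_distrl. Qed.
End FiniteSums.

Lemma Rsum_map {A B : Type} (h : B -> A) (r : seq B) (F : A -> R) :
  Rsum (map h r) F = Rsum r (fun b => F (h b)).
Proof. by rewrite !RsumE big_map. Qed.

Lemma Rsum_flatten {A : Type} (ss : seq (seq A)) (F : A -> R) :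
  Rsum (flatten ss) F = Rsum ss (fun s => Rsum s F).
Proof. by rewrite !RsumE big_flatten; apply: eq_bigr => s _; rewrite RsumE. Qed.

Lemma exchange_Rsum {A B : Type} (s : seq A) (r : seq B) (F : A -> B -> R) :
  Rsum s (fun a => Rsum r (F a)) = Rsum r (fun b => Rsum s (F^~ b)).
Proof.
rewrite !RsumE (eq_bigr (fun a => \big[Rplus/0]_(b <- r) F a b)) => [|a _]; last exact: RsumE.
by rewrite exchange_big; apply: eq_bigr => b _; rewrite RsumE.
Qed.

Section EqSums.
Variable A : eqType.
Implicit Types (s : seq A) (F G : A -> R).

Lemma eq_Rsum_seq s F G : {in s, forall a, F a = G a} -> Rsum s F = Rsum s G.
Proof. by move=> FG; rewrite !RsumE; apply: eq_big_seq. Qed.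

Lemma Rsum0_seq s F : {in s, forall a, F a = 0} -> Rsum s F = 0.
Proof. by move=> F0; rewrite RsumE big1_seq // => a /andP[_]; apply: F0. Qed.

Lemma Rsum_pred1 s i F : uniq s -> i \in s -> Rsum s (fun a => if a == i then F a else 0) = F i.
Proof.
move=> us si; rewrite RsumE (bigD1_seq i) //= eqxx big1 => [|j /negbTE-> //]; lra.
Qed.
End EqSums.

Lemma Rsum_nat_rev k (G : nat -> R) :
  Rsum (iota 0 k.+1) (fun a => G (k - a)%N) = Rsum (iota 0 k.+1) G.
Proof.
rewrite !RsumE -[iota 0 k.+1]/(index_iota 0 k.+1) [RHS]big_nat_rev.
by apply: eq_big_nat => a _; rewrite add0n subSS.
Qed.

Lemma Rsum_triangle n (F : nat -> nat -> R) :
  Rsum (iota 0 n.+1) (fun k => Rsum (iota 0 k.+1) (F^~ k)) =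
  Rsum (iota 0 n.+1) (fun j => Rsum (iota 0 (n - j).+1) (fun m => F j (j + m)%N)).
Proof.
rewrite !RsumE -[iota 0 n.+1]/(index_iota 0 n.+1).
transitivity (\big[Rplus/0]_(0 <= k < n.+1) \big[Rplus/0]_(0 <= j < n.+1 | (j < k.+1)%N) F j k).
  apply: eq_big_nat => k /andP[_ kn].
  by rewrite RsumE -[iota 0 k.+1]/(index_iota 0 k.+1) (big_nat_widen _ _ _ _ _ kn).
rewrite (exchange_big_dep_nat xpredT) //; apply: eq_big_nat => j /andP[_ jn].
rewrite (@big_cat_nat _ _ _ j 0 n.+1 _ _ (leq0n j) (ltnW jn)) big1_seq ?Monoid.mul1m; last first.
  by move=> k /andP[]; rewrite ltnS mem_index_iota /= => jk; rewrite ltnNge jk.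
rewrite big_nat_cond (eq_bigl (fun k => (j <= k < n.+1)%N && true)); last first.
  by move=> k; rewrite !ltnS; case: (j <= k)%N.
rewrite -big_nat_cond -{1}[j]add0n big_addn RsumE /index_iota !subn0 subSn //.
by apply: eq_bigr => k _; rewrite addnC.
Qed.

(** * Words and the tensor algebra *)

Section Words.
Variable d : nat.
Implicit Types (w u : seq 'I_d) (F G : seq 'I_d -> R).

Lemma mem_words_len n w : (w \in words_len d n) = (size w == n).
Proof.
elim: n w => [|n IH] [|i w] //=.
  by apply/allpairsP => -[[j u] [_ _]].
apply/allpairsP/idP => [[[j u] [_ + /= [_ ->]]]|/eqP[sw]].
  by rewrite IH.
by exists (i, w); rewrite mem_enum IH sw.
Qed.

Lemma uniq_words_len n : uniq (words_len d n).
Proof.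
elim: n => [|n IH] //=; apply: allpairs_uniq => //; first exact: enum_uniq.
by move=> [i w] [j u] _ _ [-> ->].
Qed.

Lemma mem_words_upto n w : (w \in words_upto d n) = (size w <= n)%N.
Proof.
apply/flattenP/idP => [[s /mapP[k + ->]]|wn].
  by rewrite mem_iota mem_words_len ltnS => /andP[_ +] /eqP->.
by exists (words_len d (size w)); rewrite ?mem_words_len //; apply: map_f; rewrite mem_iota ltnS.
Qed.

Lemma words_uptoS n : words_upto d n.+1 = words_upto d n ++ words_len d n.+1.
Proof. by rewrite /words_upto -addn1 iotaD map_cat flatten_cat /= ?cats0. Qed.

Lemma uniq_words_upto n : uniq (words_upto d n).
Proof.
elim: n => [|n IH]; first by [].
rewrite words_uptoS cat_uniq IH uniq_words_len andbT.
by apply/hasPn => w; rewrite mem_words_len mem_words_upto => /eqP->; rewrite ltnn.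
Qed.

Lemma size_words_len n w : w \in words_len d n -> size w = n.
Proof. by rewrite mem_words_len => /eqP. Qed.

Lemma size_words_upto n w : w \in words_upto d n -> (size w <= n)%N.
Proof. by rewrite mem_words_upto. Qed.

Lemma Rsum_words_lenS n F : Rsum (words_len d n.+1) F =
  Rsum (enum 'I_d) (fun i => Rsum (words_len d n) (fun w => F (i :: w))).
Proof. by rewrite Rsum_flatten Rsum_map; apply: eq_Rsum => i; rewrite Rsum_map. Qed.

Lemma Rsum_words_upto n F :
  Rsum (words_upto d n) F = Rsum (iota 0 n.+1) (fun m => Rsum (words_len d m) F).
Proof. by rewrite Rsum_flatten Rsum_map. Qed.

Lemma Rsum_words_upto_supp a n F : (a <= n)%N -> (forall w, (a < size w)%N -> F w = 0) ->
  Rsum (words_upto d n) F = Rsum (words_upto d a) F.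
Proof.
move=> + F0; elim: n => [|n IH]; first by rewrite leqn0 => /eqP->.
rewrite leq_eqVlt => /predU1P[-> // | an]; rewrite words_uptoS Rsum_cat IH //.
rewrite (@Rsum0_seq _ (words_len d n.+1) F) ?Rplus_0_r // => w; rewrite mem_words_len => /eqP sw.
by apply: F0; rewrite sw.
Qed.

Lemma Rsum_words_len_split k m (H : seq 'I_d -> seq 'I_d -> R) : (k <= m)%N ->
  Rsum (words_len d m) (fun u => H (take k u) (drop k u)) =
  Rsum (words_len d k) (fun u1 => Rsum (words_len d (m - k)) (H u1)).
Proof.
elim: k m H => [|k IH] m H km.
  by rewrite /= subn0 Rplus_0_r; apply: eq_Rsum => u; rewrite take0 drop0.
case: m km => // m km; rewrite !Rsum_words_lenS subSS.
by apply: eq_Rsum => i; rewrite -(IH m (fun a => H (i :: a))).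
Qed.

Lemma Rsum_words_upto_pred1 n w0 G :
  Rsum (words_upto d n) (fun w => if w == w0 then G w else 0) =
  if (size w0 <= n)%N then G w0 else 0.
Proof.
case: ifP => w0n; first by rewrite Rsum_pred1 ?uniq_words_upto ?mem_words_upto.
by apply: Rsum0_seq => w; rewrite mem_words_upto; case: eqP => // ->; rewrite w0n.
Qed.

Lemma Rsum_words_upto_tone n G : Rsum (words_upto d n) (fun w => tone w * G w) = G [::].
Proof.
rewrite -[RHS](Rsum_words_upto_pred1 n [::]); apply: eq_Rsum => -[|i w] /=; lra.
Qed.

Lemma Rsum_words_upto_letter n (i : 'I_d) G :
  Rsum (words_upto d n) (fun w => letter i w * G w) = if (0 < n)%N then G [:: i] else 0.
Proof.
rewrite -(Rsum_words_upto_pred1 n [:: i]); apply: eq_Rsum => w.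
rewrite /letter; case: eqP => _; lra.
Qed.
End Words.

Definition supp_le {d} (n : nat) (x : tensor d) := forall w, (n < size w)%N -> x w = 0.
Definition supp_ge {d} (n : nat) (x : tensor d) := forall w, (size w < n)%N -> x w = 0.

Section TensorAlgebra.
Variable d : nat.
Implicit Types (x y z p q : tensor d) (w u : seq 'I_d).

Lemma supp_le_widen m n x : supp_le m x -> (m <= n)%N -> supp_le n x.
Proof. by move=> xm mn w nw; apply: xm; apply: leq_ltn_trans nw. Qed.

Lemma eq_supp_le n x y : (forall w, x w = y w) -> supp_le n x -> supp_le n y.
Proof. by move=> xy xn w nw; rewrite -xy xn. Qed.

Lemma supp_le_tadd m n x y : supp_le m x -> supp_le n y -> supp_le (maxn m n) (tadd x y).
Proof.
move=> xm yn w; rewrite gtn_max => /andP[mw nw].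
by rewrite /tadd xm // yn // Rplus_0_r.
Qed.

Lemma supp_le_tscale n c x : supp_le n x -> supp_le n (tscale c x).
Proof. by move=> xn w nw; rewrite /tscale xn // Rmult_0_r. Qed.

Lemma supp_le_tmul m n x y : supp_le m x -> supp_le n y -> supp_le (m + n) (tmul x y).
Proof.
move=> xm yn w mnw; apply: Rsum0_seq => k; rewrite mem_iota ltnS => /andP[_ kw].
have [mk|km] := ltnP m k; first by rewrite xm ?Rmult_0_l // size_takel.
rewrite yn ?Rmult_0_r // size_drop ltn_subRL.
by apply: leq_ltn_trans mnw; rewrite leq_add2r.
Qed.

Lemma supp_le_tbracket m n x y : supp_le m x -> supp_le n y -> supp_le (m + n) (tbracket x y).
Proof.
move=> xm yn w mnw; rewrite /tbracket (supp_le_tmul xm yn) // (supp_le_tmul yn xm); first lra.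
by rewrite addnC.
Qed.

Lemma supp_ge_tmul m n x y : supp_ge m x -> supp_ge n y -> supp_ge (m + n) (tmul x y).
Proof.
move=> xm yn w wmn; apply: Rsum0_seq => k; rewrite mem_iota ltnS => /andP[_ kw].
have [km|mk] := ltnP k m; first by rewrite xm ?Rmult_0_l // size_takel.
rewrite yn ?Rmult_0_r // size_drop ltn_subLR //.
by apply: (leq_trans wmn); rewrite leq_add2r.
Qed.

Lemma tmult1 x w : tmul x tone w = x w.
Proof.
rewrite /tmul -addn1 iotaD Rsum_cat add0n (@Rsum0_seq _ (iota 0 (size w))) => [|k].
  by rewrite /= take_size drop_size /tone; lra.
rewrite mem_iota add0n => /andP[_ kw].
case E: (drop k w) => [|a u]; last by rewrite Rmult_0_r.
by move: (congr1 size E); rewrite size_drop => /eqP; rewrite subn_eq0 leqNgt kw.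
Qed.

Lemma tmul1t x w : tmul tone x w = x w.
Proof.
rewrite /tmul /= take0 drop0 (@Rsum0_seq _ (iota 1 (size w))) => [|k].
  by rewrite /tone; lra.
rewrite mem_iota add1n ltnS => /andP[k1 kw].
case E: (take k w) => [|a u]; last by rewrite Rmult_0_l.
by move: (congr1 size E); rewrite size_takel // => k0; rewrite k0 in k1.
Qed.

Lemma tmulA x y z w : tmul (tmul x y) z w = tmul x (tmul y z) w.
Proof.
pose F j k := x (take j w) * y (take (k - j) (drop j w)) * z (drop (k - j) (drop j w)).
rewrite {1}/tmul (@eq_Rsum_seq _ _ _ (fun k => Rsum (iota 0 k.+1) (F^~ k))).
  rewrite Rsum_triangle /tmul; apply: eq_Rsum => j; rewrite size_drop -Rsum_distrr.
  by apply: eq_Rsum => m; rewrite /F addKn; lra.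
move=> k; rewrite mem_iota ltnS => /andP[_ kw].
rewrite /tmul size_takel // -Rsum_distrl; apply: eq_Rsum_seq => j.
rewrite mem_iota ltnS => /andP[_ jk].
by rewrite /F take_takel // take_drop drop_drop subnK.
Qed.

Lemma tprod_cat (xs ys : seq (tensor d)) : tprod (xs ++ ys) = tmul (tprod xs) (tprod ys).
Proof.
apply: functional_extensionality => w; elim: xs w => [|x xs IH] w /=; first by rewrite tmul1t.
by rewrite tmulA; apply: eq_Rsum => k; rewrite IH.
Qed.

Lemma Rsum_tmul_words a b n p q (G : seq 'I_d -> R) :
  supp_le a p -> supp_le b q -> (a + b <= n)%N ->
  Rsum (words_upto d n) (fun u => tmul p q u * G u) =
  Rsum (words_upto d a) (fun u1 => Rsum (words_upto d b) (fun u2 => p u1 * q u2 * G (u1 ++ u2))).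
Proof.
move=> pa qb abn; pose H u1 u2 := p u1 * q u2 * G (u1 ++ u2).
transitivity (Rsum (iota 0 n.+1) (fun m => Rsum (iota 0 m.+1) (fun k =>
   Rsum (words_len d k) (fun u1 => Rsum (words_len d (m - k)) (H u1))))).
  rewrite Rsum_words_upto; apply: eq_Rsum => m.
  transitivity (Rsum (words_len d m)
                 (fun u => Rsum (iota 0 m.+1) (fun k => H (take k u) (drop k u)))).
    apply: eq_Rsum_seq => u um; rewrite /tmul (size_words_len um) -Rsum_distrl.
    by apply: eq_Rsum => k; rewrite /H cat_take_drop.
  rewrite exchange_Rsum; apply: eq_Rsum_seq => k; rewrite mem_iota ltnS => /andP[_ km].
  by rewrite Rsum_words_len_split.
rewrite Rsum_triangle.
transitivity (Rsum (words_upto d n) (fun u1 => Rsum (words_upto d (n - size u1)) (H u1))).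
  rewrite Rsum_words_upto; apply: eq_Rsum => k.
  under eq_Rsum => m do rewrite addKn.
  rewrite -exchange_Rsum; apply: eq_Rsum_seq => u1 u1k.
  by rewrite Rsum_words_upto (size_words_len u1k).
rewrite (@Rsum_words_upto_supp _ a); first last.
- by move=> u1 au1; apply: Rsum0_seq => u2 _; rewrite /H pa // !Rmult_0_l.
- exact: leq_trans (leq_addr _ _) abn.
apply: eq_Rsum_seq => u1 u1a; apply: Rsum_words_upto_supp => [|u2 bu2].
  rewrite leq_subRL; last exact: leq_trans (size_words_upto u1a) (leq_trans (leq_addr _ _) abn).
  by apply: leq_trans abn; rewrite leq_add2r (size_words_upto u1a).
by rewrite /H qb // Rmult_0_r Rmult_0_l.
Qed.
End TensorAlgebra.

(** * Lie elements and the translation [T_v] *)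

Section LieElements.
Variable d : nat.
Implicit Types (x p q : tensor d) (u w : seq 'I_d).

Lemma lie_nil p : is_lie p -> p [::] = 0.
Proof.
elim=> {p} [i //|p q _ p0 _ q0|c p _ p0|p q _ _ _ _|p q pq _ p0].
- by rewrite /tadd p0 q0 Rplus_0_r.
- by rewrite /tscale p0 Rmult_0_r.
- by rewrite /tbracket /tmul /=; lra.
- by rewrite -pq.
Qed.

Lemma lie_supp_le p : is_lie p -> exists n, supp_le n p.
Proof.
elim=> {p} [i|p q _ [m pm] _ [n qn]|c p _ [n pn]|p q _ [m pm] _ [n qn]|p q pq _ [n pn]].
- by exists 1%N => w w1; rewrite /letter; case: eqP => // wi; rewrite wi in w1.
- by exists (maxn m n); apply: supp_le_tadd.
- by exists n; apply: supp_le_tscale.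
- by exists (m + n)%N; apply: supp_le_tbracket.
- by exists n; apply: eq_supp_le pn.
Qed.

Definition homog k x : tensor d := fun u => if size u == k then x u else 0.

Lemma homog_tmul k p q u :
  homog k (tmul p q) u = Rsum (iota 0 k.+1) (fun a => tmul (homog a p) (homog (k - a)%N q) u).
Proof.
rewrite /homog; have [uk|uk] := eqVneq (size u) k.
  rewrite /tmul uk exchange_Rsum; apply: eq_Rsum_seq => j; rewrite mem_iota ltnS => /andP[_ jk].
  rewrite size_takel ?uk // size_drop uk.
  rewrite (@eq_Rsum _ _ _ (fun a => if a == j then p (take j u) * q (drop j u) else 0)).
    by rewrite Rsum_pred1 ?iota_uniq // mem_iota ltnS.
  by move=> a; case: (eqVneq j a) => [<-|_]; rewrite ?eqxx ?Rmult_0_l.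
symmetry; apply: Rsum0_seq => a; rewrite mem_iota ltnS => /andP[_ ak].
apply: Rsum0_seq => j; rewrite mem_iota ltnS => /andP[_ ju].
rewrite size_takel // size_drop; case: (eqVneq j a) => [ja|_]; last by rewrite Rmult_0_l.
case: eqP => [sub|_]; last by rewrite Rmult_0_r.
by subst j; case/eqP: uk; rewrite -(subnK ju) sub subnK.
Qed.

Lemma in_LN_supp n x : in_LN n x -> supp_le n x.
Proof. by move=> [l [_ xl]] w nw; rewrite xl /tproj leqNgt nw. Qed.

Hypothesis d_gt0 : (0 < d)%N.

Lemma lie0 : is_lie (fun _ : seq 'I_d => 0).
Proof.
apply: (lie_ext (p := tscale 0 (letter (Ordinal d_gt0)))); last exact/lie_scale/lie_letter.
by move=> w; rewrite /tscale Rmult_0_l.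
Qed.

Lemma lie_Rsum A (s : seq A) (F : A -> tensor d) : (forall a, is_lie (F a)) ->
  is_lie (fun u => Rsum s (F^~ u)).
Proof.
move=> F_lie; elim: s => [|a s IH]; first exact: lie0.
by apply: (lie_ext (p := tadd (F a) (fun u => Rsum s (F^~ u)))) => //; apply: lie_add.
Qed.

Lemma homog_lie k p : is_lie p -> is_lie (homog k p).
Proof.
move=> p_lie; elim: p_lie k => {p} [i|p q _ IHp _ IHq|c p _ IHp|p q _ IHp _ IHq|p q pq _ IHp] k.
- have [->|k1] := eqVneq k 1%N.
    apply: (lie_ext (p := letter i)); last exact: lie_letter.
    by move=> w; rewrite /homog /letter; case: (eqVneq w [:: i]) => [->|] //=; case: ifP.
  apply: (lie_ext (p := fun _ => 0)); last exact: lie0.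
  move=> w; rewrite /homog /letter; case: (eqVneq w [:: i]) => [->|] /=; last by case: ifP.
  by rewrite eq_sym (negbTE k1).
- apply: (lie_ext (p := tadd (homog k p) (homog k q))); last exact: lie_add.
  by move=> w; rewrite /homog /tadd; case: eqP => _ //; lra.
- apply: (lie_ext (p := tscale c (homog k p))); last exact: lie_scale.
  by move=> w; rewrite /homog /tscale; case: eqP => _ //; lra.
- apply: (lie_ext (p := fun u => Rsum (iota 0 k.+1)
           (fun a => tbracket (homog a p) (homog (k - a)%N q) u))); last first.
    by apply: lie_Rsum => a; apply: lie_bracket.
  move=> u; rewrite /tbracket Rsum_sub.
  have -> : homog k (fun w => tmul p q w - tmul q p w) u =
            homog k (tmul p q) u - homog k (tmul q p) u.
    by rewrite /homog; case: eqP => _; lra.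
  rewrite !homog_tmul -(Rsum_nat_rev k (fun a => tmul (homog a q) (homog (k - a)%N p) u)).
  congr (_ - _); apply: eq_Rsum_seq => a; rewrite mem_iota ltnS => /andP[_ ak].
  by rewrite subKn.
- by apply: (lie_ext (p := homog k p)) => // w; rewrite /homog pq.
Qed.

Lemma tproj_lie n (l : tensor d) : is_lie l -> is_lie (tproj n l).
Proof.
move=> l_lie.
apply: (lie_ext (p := fun u => Rsum (iota 0 n.+1) (fun k => homog k l u))); last first.
  by apply: lie_Rsum => k; apply: homog_lie.
move=> u; rewrite /tproj /homog; case: leqP => un.
  rewrite (@eq_Rsum _ _ _ (fun k => if k == size u then l u else 0)) => [|k].
    by rewrite Rsum_pred1 ?iota_uniq // mem_iota ltnS.
  by rewrite eq_sym.
apply: Rsum0_seq => k; rewrite mem_iota ltnS => /andP[_ kn].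
by case: eqP => // uk; rewrite uk ltnNge kn in un.
Qed.

Lemma in_LN_lie n x : in_LN n x -> is_lie x.
Proof. by move=> [l [l_lie xl]]; apply: (lie_ext (p := tproj n l)) => //; apply: tproj_lie. Qed.
End LieElements.

Section Translation.
Variables (d : nat) (v : 'I_d -> tensor d) (N' : nat).
Hypothesis v_lie : forall i, is_lie (v i).
Hypothesis v_supp : forall i, supp_le N' (v i).
Hypothesis N'_gt0 : (0 < N')%N.
Implicit Types (x p q : tensor d) (u w : seq 'I_d).

Definition translate_word w : tensor d := tprod [seq tadd (letter i) (v i) | i <- w].

Lemma supp_le_translated_letter i : supp_le N' (tadd (letter i) (v i)).
Proof.
apply: (@supp_le_widen _ (maxn 1 N')); last by rewrite geq_max N'_gt0 leqnn.
apply: supp_le_tadd => // w w1; rewrite /letter; case: eqP => // wi.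
by rewrite wi in w1.
Qed.

Lemma supp_ge_translated_letter i : supp_ge 1 (tadd (letter i) (v i)).
Proof. by case=> // _; rewrite /tadd (lie_nil (v_lie i)) /letter /=; lra. Qed.

Lemma supp_le_translate_word w : supp_le (size w * N') (translate_word w).
Proof.
elim: w => [|i w IH] /=; first by case.
by rewrite mulSn; apply: supp_le_tmul IH; apply: supp_le_translated_letter.
Qed.

Lemma supp_ge_translate_word w : supp_ge (size w) (translate_word w).
Proof.
elim: w => [|i w IH] //=; rewrite -add1n.
by apply: supp_ge_tmul IH; apply: supp_ge_translated_letter.
Qed.

Lemma translate_word_cat w1 w2 :
  translate_word (w1 ++ w2) = tmul (translate_word w1) (translate_word w2).
Proof. by rewrite /translate_word map_cat tprod_cat. Qed.

Lemma translate_tE n x u : supp_le n x ->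
  translate_t v x u = Rsum (words_upto d n) (fun w => x w * translate_word w u).
Proof.
move=> xn.
rewrite -[LHS]/(Rsum (words_upto d (size u)) (fun w => x w * translate_word w u)).
rewrite -(@Rsum_words_upto_supp _ (size u) (maxn (size u) n)); first last.
- by move=> w uw; rewrite supp_ge_translate_word // Rmult_0_r.
- exact: leq_maxl.
apply: Rsum_words_upto_supp => [|w nw]; first exact: leq_maxr.
by rewrite xn // Rmult_0_l.
Qed.

Lemma supp_le_translate n x : supp_le n x -> supp_le (n * N') (translate_t v x).
Proof.
move=> xn u nu; rewrite (translate_tE u xn); apply: Rsum0_seq => w wn.
rewrite supp_le_translate_word ?Rmult_0_r //; apply: leq_ltn_trans nu.
by rewrite leq_mul2r (size_words_upto wn) orbT.
Qed.

Lemma translate_tmul m n p q u : supp_le m p -> supp_le n q ->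
  translate_t v (tmul p q) u = tmul (translate_t v p) (translate_t v q) u.
Proof.
move=> pm qn; rewrite (translate_tE u (supp_le_tmul pm qn)).
rewrite (Rsum_tmul_words (fun w => translate_word w u) pm qn (leqnn _)) /tmul.
rewrite (@eq_Rsum _ _ _ (fun k => Rsum (words_upto d m) (fun w1 => Rsum (words_upto d n) (fun w2 =>
   p w1 * q w2 * (translate_word w1 (take k u) * translate_word w2 (drop k u)))))); last first.
  move=> k; rewrite (translate_tE _ pm) (translate_tE _ qn) -Rsum_distrl.
  by apply: eq_Rsum => w1; rewrite -Rsum_distrr; apply: eq_Rsum => w2; lra.
rewrite [RHS]exchange_Rsum; apply: eq_Rsum => w1; rewrite [RHS]exchange_Rsum.
by apply: eq_Rsum => w2; rewrite Rsum_distrr translate_word_cat.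
Qed.

Lemma translate_lie p : is_lie p -> is_lie (translate_t v p).
Proof.
elim=> {p} [i|p q _ IHp _ IHq|c p _ IHp|p q p_lie IHp q_lie IHq|p q pq _ IHp].
- apply: (lie_ext (p := tadd (letter i) (v i))); last exact/lie_add/v_lie/lie_letter.
  move=> [|c u]; rewrite /translate_t Rsum_words_upto_letter /=.
    by rewrite /tadd (lie_nil (v_lie i)) /letter /=; lra.
  by rewrite tmult1.
- apply: (lie_ext (p := tadd (translate_t v p) (translate_t v q))); last exact: lie_add.
  by move=> u; rewrite /tadd /translate_t -Rsum_split; apply: eq_Rsum => w; lra.
- apply: (lie_ext (p := tscale c (translate_t v p))); last exact: lie_scale.
  by move=> u; rewrite /tscale /translate_t -Rsum_distrr; apply: eq_Rsum => w; lra.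
- have [[m pm] [n qn]] := (lie_supp_le p_lie, lie_supp_le q_lie).
  apply: (lie_ext (p := tbracket (translate_t v p) (translate_t v q))); last exact: lie_bracket.
  move=> u; rewrite /tbracket -(translate_tmul u pm qn) -(translate_tmul u qn pm).
  by rewrite /translate_t -Rsum_sub; apply: eq_Rsum => w; lra.
- by apply: (lie_ext (p := translate_t v p)) => // u; apply: eq_Rsum => w; rewrite pq.
Qed.

Lemma translate_in_LN n x : (0 < d)%N -> in_LN n x -> in_LN (n * N') (translate_t v x).
Proof.
move=> d_gt0 xn; exists (translate_t v x); split; first exact/translate_lie/in_LN_lie/xn.
move=> u; rewrite /tproj; case: leqP => // nu.
by rewrite (supp_le_translate (in_LN_supp xn)).
Qed.
End Translation.

(** * Smooth functions on R^e *)

Section SmoothFunctions.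
Variable e : nat.
Implicit Types (g h : point e -> R) (y z : point e).

Definition smooth_Re h := forall l : seq 'I_e, continuous_Re (iter_pd l h) /\
  forall i y, ex_derive (fun t => iter_pd l h (shift y i t)) 0.

Lemma shift0 y i : shift y i 0 = y.
Proof. by apply: functional_extensionality => k; rewrite /shift; case: eqP => _ //; lra. Qed.

Lemma shiftD y i a b : shift (shift y i a) i b = shift y i (a + b).
Proof. by apply: functional_extensionality => k; rewrite /shift; case: eqP => _ //; lra. Qed.

Lemma shiftC y k m a b : k != m -> shift (shift y k a) m b = shift (shift y m b) k a.
Proof.
move=> km; apply: functional_extensionality => c; rewrite /shift.
case: (eqVneq c m) => [cm|_]; case: (eqVneq c k) => [ck|_] //=.
by rewrite -ck -cm eqxx in km.
Qed.

Lemma continuous_Re_comp2 (op : R -> R -> R) (F G : point e -> R) :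
  (forall a b, continuity_2d_pt op a b) -> continuous_Re F -> continuous_Re G ->
  continuous_Re (fun y => op (F y) (G y)).
Proof.
move=> op_c F_c G_c y eps eps_gt0.
have [del op_del] := op_c (F y) (G y) (mkposreal _ eps_gt0).
have [d1 [d1_gt0 F_d1]] := F_c y del (cond_pos del).
have [d2 [d2_gt0 G_d2]] := G_c y del (cond_pos del).
exists (Rmin d1 d2); split=> [|z zy]; first exact: Rmin_pos.
apply: op_del; [apply: F_d1 | apply: G_d2] => k; apply: Rlt_le_trans (zy k) _.
  exact: Rmin_l.
exact: Rmin_r.
Qed.

Lemma continuous_Re_const c : continuous_Re (fun _ : point e => c).
Proof. by move=> y eps eps_gt0; exists 1; split=> [|z _]; rewrite ?Rminus_eq_0 ?Rabs_R0; lra. Qed.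

Lemma continuous_Re_add F G :
  continuous_Re F -> continuous_Re G -> continuous_Re (fun y => F y + G y).
Proof.
apply: continuous_Re_comp2 => a b.
exact: continuity_2d_pt_plus (continuity_2d_pt_id1 a b) (continuity_2d_pt_id2 a b).
Qed.

Lemma continuous_Re_mul F G :
  continuous_Re F -> continuous_Re G -> continuous_Re (fun y => F y * G y).
Proof.
apply: continuous_Re_comp2 => a b.
exact: continuity_2d_pt_mult (continuity_2d_pt_id1 a b) (continuity_2d_pt_id2 a b).
Qed.

Lemma pd_const c i y : pd i (fun _ : point e => c) y = 0.
Proof. by rewrite /pd Derive_const. Qed.

Lemma pd_coord k j y : pd k (fun z : point e => z j) y = if k == j then 1 else 0.
Proof.
rewrite /pd /shift; case: (eqVneq k j) => [kj|_]; last exact: Derive_const.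
by subst k; apply: is_derive_unique; auto_derive.
Qed.

Lemma pdD i g h y :
  ex_derive (fun t => g (shift y i t)) 0 -> ex_derive (fun t => h (shift y i t)) 0 ->
  pd i (fun z => g z + h z) y = pd i g y + pd i h y.
Proof. by move=> g_d h_d; rewrite /pd Derive_plus. Qed.

Lemma pdM i g h y :
  ex_derive (fun t => g (shift y i t)) 0 -> ex_derive (fun t => h (shift y i t)) 0 ->
  pd i (fun z => g z * h z) y = pd i g y * h y + g y * pd i h y.
Proof. by move=> g_d h_d; rewrite /pd Derive_mult // shift0. Qed.

Lemma pdZ i c h y : pd i (fun z => c * h z) y = c * pd i h y.
Proof. by rewrite /pd Derive_scal. Qed.

Lemma iter_pd_const c l : iter_pd l (fun _ : point e => c) = fun _ => if l is [::] then c else 0.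
Proof.
elim: l => [|i l IH] //=; rewrite IH.
by apply: functional_extensionality => y; rewrite pd_const.
Qed.

Lemma iter_pdD l g h :
  (forall l' i y, (size l' < size l)%N -> ex_derive (fun t => iter_pd l' g (shift y i t)) 0) ->
  (forall l' i y, (size l' < size l)%N -> ex_derive (fun t => iter_pd l' h (shift y i t)) 0) ->
  iter_pd l (fun z => g z + h z) = fun y => iter_pd l g y + iter_pd l h y.
Proof.
elim: l => [|i l IH] g_d h_d /=; first by [].
rewrite IH => [|l' i' y /leqW|l' i' y /leqW]; [|exact: g_d|exact: h_d].
by apply: functional_extensionality => y; apply: pdD; [apply: g_d | apply: h_d].
Qed.

Lemma smooth_Re_pd i h : smooth_Re h -> smooth_Re (pd i h).
Proof. by move=> h_s l; have := h_s (rcons l i); rewrite /iter_pd foldr_rcons. Qed.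

Lemma smooth_Re_const c : smooth_Re (fun _ => c).
Proof.
move=> l; rewrite iter_pd_const; split=> [|i y]; first exact: continuous_Re_const.
exact: ex_derive_const.
Qed.

Lemma smooth_Re_coord j : smooth_Re (fun y : point e => y j).
Proof.
have const_or l : l = [::] \/ exists c, iter_pd l (fun y : point e => y j) = fun _ => c.
  elim: l => [|i l [->|[c cE]]] /=; [by left|right|right].
  - by exists (if i == j then 1 else 0); apply: functional_extensionality => y; apply: pd_coord.
  - by exists 0; rewrite cE; apply: functional_extensionality => y; apply: pd_const.
move=> l; case: (const_or l) => [->|[c cE]]; last by rewrite cE; exact: (smooth_Re_const c [::]).
split=> [y eps eps_gt0|i y]; first by exists eps; split=> // z; apply.
rewrite /shift /=; case: (j == i); last exact: ex_derive_const.
exact: ex_derive_plus (ex_derive_const _ _) (ex_derive_id _).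
Qed.

Lemma smooth_Re_add g h : smooth_Re g -> smooth_Re h -> smooth_Re (fun y => g y + h y).
Proof.
move=> g_s h_s l; rewrite iter_pdD => [|l' i y _|l' i y _]; [|exact: (g_s l').2|exact: (h_s l').2].
split=> [|i y]; first exact: continuous_Re_add (g_s l).1 (h_s l).1.
exact: ex_derive_plus ((g_s l).2 i y) ((h_s l).2 i y).
Qed.

(* Induction on the order: one more derivative of [g h] is [pd g * h + g * pd h]. *)
Lemma smooth_Re_mul g h : smooth_Re g -> smooth_Re h -> smooth_Re (fun y => g y * h y).
Proof.
suff mul_le : forall n l, (size l <= n)%N -> forall g h, smooth_Re g -> smooth_Re h ->
    continuous_Re (iter_pd l (fun y => g y * h y)) /\
    forall i y, ex_derive (fun t => iter_pd l (fun y => g y * h y) (shift y i t)) 0.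
  by move=> g_s h_s l; apply: (mul_le (size l)).
clear g h; elim=> [|n IH] l ln g h g_s h_s.
  case: l ln => // _ /=; split=> [|i y]; first exact: continuous_Re_mul (g_s [::]).1 (h_s [::]).1.
  exact: ex_derive_mult ((g_s [::]).2 i y) ((h_s [::]).2 i y).
have [ln'|nl] := leqP (size l) n; first exact: IH.
case/lastP: l ln nl => [//|l i]; rewrite size_rcons ltnS => ln _.
have [c1 d1] := IH l ln _ _ (smooth_Re_pd i g_s) h_s.
have [c2 d2] := IH l ln _ _ g_s (smooth_Re_pd i h_s).
have -> : iter_pd (rcons l i) (fun y => g y * h y) =
    fun y => iter_pd l (fun z => pd i g z * h z) y + iter_pd l (fun z => g z * pd i h z) y.
  rewrite /iter_pd foldr_rcons -/(iter_pd _ _).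
  have -> : pd i (fun y => g y * h y) = fun z => pd i g z * h z + g z * pd i h z.
    apply: functional_extensionality => z.
    by apply: pdM; [apply: (g_s [::]).2 | apply: (h_s [::]).2].
  apply: iter_pdD => l' j z l'l; have l'n : (size l' <= n)%N by apply: leq_trans ln; apply: ltnW.
  - exact: (IH l' l'n _ _ (smooth_Re_pd i g_s) h_s).2.
  - exact: (IH l' l'n _ _ g_s (smooth_Re_pd i h_s)).2.
split=> [|j y]; first exact: continuous_Re_add.
exact: ex_derive_plus (d1 j y) (d2 j y).
Qed.

Lemma smooth_Re_scale c h : smooth_Re h -> smooth_Re (fun y => c * h y).
Proof. exact/smooth_Re_mul/smooth_Re_const. Qed.

Lemma smooth_Re_Rsum A (s : seq A) (F : A -> point e -> R) :
  (forall a, smooth_Re (F a)) -> smooth_Re (fun y => Rsum s (F^~ y)).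
Proof.
move=> F_s; elim: s => [|a s IH]; first exact: smooth_Re_const.
exact: smooth_Re_add (F_s a) IH.
Qed.

Lemma pd_Rsum A (s : seq A) (F : A -> point e -> R) i y : (forall a, smooth_Re (F a)) ->
  pd i (fun z => Rsum s (F^~ z)) y = Rsum s (fun a => pd i (F a) y).
Proof.
move=> F_s; elim: s => [|a s IH]; first exact: pd_const.
rewrite Rsum_cons -IH; apply: pdD; first exact: (F_s a [::]).2.
exact: ((smooth_Re_Rsum s F_s) [::]).2.
Qed.
End SmoothFunctions.

Section Schwarz.
Variable e : nat.
Implicit Types (h G : point e -> R) (y p : point e).

Lemma Derive_shift G i p u : (forall q, ex_derive (fun t => G (shift q i t)) 0) ->
  ex_derive (fun t => G (shift p i t)) u /\
  Derive (fun t => G (shift p i t)) u = pd i G (shift p i u).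
Proof.
move=> G_d; pose g t := G (shift (shift p i u) i t).
have gE z : g (z - u) = G (shift p i z) by rewrite /g shiftD; congr (G (shift _ _ _)); ring.
have g_d : ex_derive g (u - u) by rewrite Rminus_eq_0; apply: G_d.
have sub_d : ex_derive (fun z => z - u) u by auto_derive.
split; first by apply: (ex_derive_ext (fun z => g (z - u))) => //; apply: ex_derive_comp.
rewrite -(Derive_ext _ _ _ gE) Derive_comp //.
have -> : Derive (fun z => z - u) u = 1 by apply: is_derive_unique; auto_derive.
by rewrite Rminus_eq_0 Rmult_1_l.
Qed.

Lemma continuity_2d_shift F y k m : continuous_Re F ->
  continuity_2d_pt (fun u v => F (shift (shift y k u) m v)) 0 0.
Proof.
move=> F_c eps; have [del [del_gt0 F_del]] := F_c y eps (cond_pos eps).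
have del2_gt0 : 0 < del / 2 by lra.
exists (mkposreal _ del2_gt0) => u v /= u_del v_del; rewrite !shift0; apply: F_del => c.
move: u_del v_del; rewrite !Rminus_0_r /shift => u_del v_del; case: (c == m); case: (c == k) => /=.
- by replace (y c + u + v - y c) with (u + v) by ring; have := Rabs_triang u v; lra.
- by replace (y c + v - y c) with v by ring; lra.
- by replace (y c + u - y c) with u by ring; lra.
- by rewrite Rminus_eq_0 Rabs_R0; lra.
Qed.

Lemma pdC h k m y : smooth_Re h -> pd k (pd m h) y = pd m (pd k h) y.
Proof.
move=> h_s; case: (eqVneq k m) => [-> //|km].
have shift_d (l : seq 'I_e) i q u := Derive_shift q u ((h_s l).2 i).
pose f u v := h (shift (shift y k u) m v).
have f_swap u v : f u v = h (shift (shift y m v) k u) by rewrite /f shiftC.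
have f_v u v : Derive (f u) v = pd m h (shift (shift y m v) k u).
  by rewrite /f (shift_d [::] m _ v).2 shiftC.
have f_u u v : Derive (f^~ v) u = pd k h (shift (shift y k u) m v).
  by rewrite (Derive_ext _ _ _ (f_swap^~ v)) (shift_d [::] k _ u).2 shiftC // eq_sym.
have f_vu u v :
    Derive (fun z => Derive (f z) v) u = iter_pd [:: k; m] h (shift (shift y k u) m v).
  by rewrite (Derive_ext _ _ _ (f_v^~ v)) (shift_d [:: m] k _ u).2 shiftC // eq_sym.
have f_uv u v :
    Derive (fun z => Derive (f^~ z) u) v = iter_pd [:: m; k] h (shift (shift y k u) m v).
  by rewrite (Derive_ext _ _ _ (f_u u)) (shift_d [:: k] m _ v).2.
have -> : pd m (pd k h) y = Derive (fun z => Derive (f^~ z) 0) 0.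
  by apply: Derive_ext => z; apply: Derive_ext => t; rewrite f_swap.
apply: (Schwarz f 0 0).
- exists (mkposreal 1 Rlt_0_1) => u v _ _; split; [|split; [|split]].
  + apply: (ex_derive_ext (fun z => h (shift (shift y m v) k z))) => [z|]; first by rewrite f_swap.
    exact: (shift_d [::] k _ u).1.
  + exact: (shift_d [::] m _ v).1.
  + apply: (ex_derive_ext (fun z => pd m h (shift (shift y m v) k z))) => [z|].
      by rewrite f_v.
    exact: (shift_d [:: m] k _ u).1.
  + apply: (ex_derive_ext (fun z => pd k h (shift (shift y k u) m z))) => [z|].
      by rewrite f_u.
    exact: (shift_d [:: k] m _ v).1.
- exact: continuity_2d_pt_ext (fun u v => esym (f_vu u v)) (continuity_2d_shift _ _ _ (h_s _).1).
- exact: continuity_2d_pt_ext (fun u v => esym (f_uv u v)) (continuity_2d_shift _ _ _ (h_s _).1).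
Qed.
End Schwarz.

(** * Vector fields and the differential operators of tensors *)

Section VectorFields.
Variable e : nat.
Implicit Types (X P Q : VF e) (g : point e -> R) (y : point e).

Definition lie_deriv X g : point e -> R := fun y => Rsum (enum 'I_e) (fun k => X y k * pd k g y).

Definition smooth_field X := forall j, smooth_Re (fun y => X y j).

Lemma eq_lie_deriv X Y g y : (forall z k, X z k = Y z k) -> lie_deriv X g y = lie_deriv Y g y.
Proof. by move=> XY; apply: eq_Rsum => k; rewrite XY. Qed.

Lemma lie_derivDl X Y g y :
  lie_deriv (fun z k => X z k + Y z k) g y = lie_deriv X g y + lie_deriv Y g y.
Proof. by rewrite /lie_deriv -Rsum_split; apply: eq_Rsum => k; lra. Qed.

Lemma lie_derivBl X Y g y :
  lie_deriv (fun z k => X z k - Y z k) g y = lie_deriv X g y - lie_deriv Y g y.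
Proof. by rewrite /lie_deriv -Rsum_sub; apply: eq_Rsum => k; lra. Qed.

Lemma lie_derivZl c X g y : lie_deriv (fun z k => c * X z k) g y = c * lie_deriv X g y.
Proof. by rewrite /lie_deriv -Rsum_distrr; apply: eq_Rsum => k; lra. Qed.

Lemma smooth_Re_lie_deriv X g : smooth_field X -> smooth_Re g -> smooth_Re (lie_deriv X g).
Proof. by move=> X_s g_s; apply: smooth_Re_Rsum => k; apply/smooth_Re_mul/smooth_Re_pd. Qed.

Lemma pd_lincomb A (s : seq A) (c : A -> R) (G : A -> point e -> R) k y :
  (forall a, smooth_Re (G a)) ->
  pd k (fun z => Rsum s (fun a => c a * G a z)) y = Rsum s (fun a => c a * pd k (G a) y).
Proof.
move=> G_s; rewrite pd_Rsum => [|a]; last exact: smooth_Re_scale.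
by apply: eq_Rsum => a; rewrite pdZ.
Qed.

Lemma lie_deriv_lincomb X A (s : seq A) (c : A -> R) (G : A -> point e -> R) y :
  (forall a, smooth_Re (G a)) ->
  lie_deriv X (fun z => Rsum s (fun a => c a * G a z)) y =
  Rsum s (fun a => c a * lie_deriv X (G a) y).
Proof.
move=> G_s; rewrite /lie_deriv
  (@eq_Rsum _ _ _ (fun k => Rsum s (fun a => c a * (X y k * pd k (G a) y)))).
  by rewrite exchange_Rsum; apply: eq_Rsum => a; rewrite -Rsum_distrr.
by move=> k; rewrite pd_lincomb // -Rsum_distrr; apply: eq_Rsum => a; lra.
Qed.

Lemma lie_deriv_coord X j y : lie_deriv X (fun z => z j) y = X y j.
Proof.
rewrite /lie_deriv (@eq_Rsum _ _ _ (fun k => if k == j then X y k else 0)) => [|k].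
  by rewrite Rsum_pred1 ?enum_uniq ?mem_enum.
by rewrite pd_coord; case: eqP => _; lra.
Qed.

Lemma lie_deriv_comp P Q g y : smooth_field Q -> smooth_Re g ->
  lie_deriv P (lie_deriv Q g) y =
  lie_deriv (fun z m => lie_deriv P (fun z' => Q z' m) z) g y +
  Rsum (enum 'I_e) (fun k => Rsum (enum 'I_e) (fun m => P y k * Q y m * pd k (pd m g) y)).
Proof.
move=> Q_s g_s; rewrite /lie_deriv (@eq_Rsum _ _ _ (fun k =>
    Rsum (enum 'I_e) (fun m => P y k * pd k (fun z => Q z m) y * pd m g y) +
    Rsum (enum 'I_e) (fun m => P y k * Q y m * pd k (pd m g) y))) => [|k].
  rewrite Rsum_split exchange_Rsum; congr (_ + _); apply: eq_Rsum => m.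
  by rewrite -Rsum_distrl.
rewrite pd_Rsum => [|m]; last exact/smooth_Re_mul/smooth_Re_pd.
rewrite -Rsum_distrr -Rsum_split; apply: eq_Rsum => m.
rewrite pdM; [lra | exact: (Q_s m [::]).2 | exact: (smooth_Re_pd m g_s [::]).2].
Qed.

(* The second-order parts of [P Q] and [Q P] agree by the symmetry of second derivatives. *)
Lemma lie_deriv_commutator P Q g y : smooth_field P -> smooth_field Q -> smooth_Re g ->
  lie_deriv P (lie_deriv Q g) y - lie_deriv Q (lie_deriv P g) y =
  lie_deriv (fun z m => lie_deriv P (fun z' => Q z' m) z - lie_deriv Q (fun z' => P z' m) z) g y.
Proof.
move=> P_s Q_s g_s; rewrite !lie_deriv_comp //.
have -> : Rsum (enum 'I_e) (fun k => Rsum (enum 'I_e) (fun m => Q y k * P y m * pd k (pd m g) y)) =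
          Rsum (enum 'I_e) (fun k => Rsum (enum 'I_e) (fun m => P y k * Q y m * pd k (pd m g) y)).
  by rewrite exchange_Rsum; apply: eq_Rsum => k; apply: eq_Rsum => m; rewrite (pdC _ _ _ g_s); lra.
rewrite lie_derivBl; lra.
Qed.
End VectorFields.

Section DifferentialOperators.
Variables (d e : nat) (F : 'I_d -> VF e).
Hypothesis F_s : forall i, smooth_field (F i).
Implicit Types (g : point e -> R) (y : point e) (x p q : tensor d) (u w : seq 'I_d).

Definition diffop_word u g := foldr (fun i => lie_deriv (F i)) g u.

Definition diffop n x g : point e -> R :=
  fun y => Rsum (words_upto d n) (fun u => x u * diffop_word u g y).

Lemma smooth_Re_diffop_word u g : smooth_Re g -> smooth_Re (diffop_word u g).
Proof. by move=> g_s; elim: u => [|i u IH] //=; apply: smooth_Re_lie_deriv. Qed.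

Lemma smooth_Re_diffop n x g : smooth_Re g -> smooth_Re (diffop n x g).
Proof. by move=> g_s; apply: smooth_Re_Rsum => u; apply/smooth_Re_scale/smooth_Re_diffop_word. Qed.

Lemma diffop_word_lincomb A u (s : seq A) (c : A -> R) (G : A -> point e -> R) y :
  (forall a, smooth_Re (G a)) ->
  diffop_word u (fun z => Rsum s (fun a => c a * G a z)) y =
  Rsum s (fun a => c a * diffop_word u (G a) y).
Proof.
move=> G_s; elim: u y => [|i u IH] y //=.
have -> : diffop_word u (fun z => Rsum s (fun a => c a * G a z)) =
          fun z => Rsum s (fun a => c a * diffop_word u (G a) z).
  by apply: functional_extensionality => z; apply: IH.
by apply: lie_deriv_lincomb => a; apply: smooth_Re_diffop_word.
Qed.

Lemma fw_diffop_word w y j : fw F w y j = diffop_word w (fun z => z j) y.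
Proof.
elim: w y => [|i [|i' w] IH] y //=; first by rewrite lie_deriv_coord.
by rewrite /tri /lie_deriv; apply: eq_Rsum => k; do 2!f_equal; apply: functional_extensionality.
Qed.

Lemma diffop_supp m n x g y : supp_le m x -> supp_le n x -> diffop m x g y = diffop n x g y.
Proof.
wlog mn : m n / (m <= n)%N => [hyp xm xn|xm _].
  by case: (leqP m n) => [|/ltnW] mn; [|symmetry]; apply: hyp.
by symmetry; apply: Rsum_words_upto_supp => // u mu; rewrite xm // Rmult_0_l.
Qed.

Lemma diffop_tmul a b n p q g y : smooth_Re g ->
  supp_le a p -> supp_le b q -> (a + b <= n)%N ->
  diffop n (tmul p q) g y = diffop a p (diffop b q g) y.
Proof.
move=> g_s pa qb abn; rewrite /diffop (Rsum_tmul_words (fun u => diffop_word u g y) pa qb abn).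
apply: eq_Rsum => u1; rewrite diffop_word_lincomb => [|u2]; last exact: smooth_Re_diffop_word.
by rewrite -Rsum_distrr; apply: eq_Rsum => u2; rewrite /diffop_word foldr_cat Rmult_assoc.
Qed.

Lemma diffop_tadd n x1 x2 g y : diffop n (tadd x1 x2) g y = diffop n x1 g y + diffop n x2 g y.
Proof. by rewrite /diffop -Rsum_split; apply: eq_Rsum => u; rewrite /tadd; lra. Qed.

Lemma diffop_tscale n c x g y : diffop n (tscale c x) g y = c * diffop n x g y.
Proof. by rewrite /diffop -Rsum_distrr; apply: eq_Rsum => u; rewrite /tscale; lra. Qed.

Lemma diffop_tbracket n p q g y :
  diffop n (tbracket p q) g y = diffop n (tmul p q) g y - diffop n (tmul q p) g y.
Proof. by rewrite /diffop -Rsum_sub; apply: eq_Rsum => u; rewrite /tbracket; lra. Qed.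

Lemma diffop_letter n i g y :
  diffop n (letter i) g y = if (0 < n)%N then lie_deriv (F i) g y else 0.
Proof. exact: Rsum_words_upto_letter. Qed.

Lemma diffop_tone n g y : diffop n tone g y = g y.
Proof. exact: Rsum_words_upto_tone. Qed.

Lemma eq_diffop n x1 x2 g y : (forall w, x1 w = x2 w) -> diffop n x1 g y = diffop n x2 g y.
Proof. by move=> x12; apply: eq_Rsum => u; rewrite x12. Qed.

Definition coord_field n x : VF e := fun z k => diffop n x (fun z' => z' k) z.

Lemma smooth_field_coord_field n x : smooth_field (coord_field n x).
Proof. by move=> k; apply/smooth_Re_diffop/smooth_Re_coord. Qed.

(* A derivation along a vector field [X] maps the coordinate function [z_k] to [X_k],
   so the field has to be [coord_field n x]. *)
Definition first_order x := exists a, supp_le a x /\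
  forall n g y, (a <= n)%N -> smooth_Re g -> diffop n x g y = lie_deriv (coord_field n x) g y.

Lemma first_order_letter i : first_order (letter i).
Proof.
exists 1%N; split=> [w|n g y n_gt0 _].
  by rewrite /letter; case: eqP => // ->.
rewrite diffop_letter n_gt0; apply: eq_lie_deriv => z k.
by rewrite /coord_field diffop_letter n_gt0 lie_deriv_coord.
Qed.

Lemma first_order_tadd p q : first_order p -> first_order q -> first_order (tadd p q).
Proof.
move=> [a [pa p1]] [b [qb q1]]; exists (maxn a b); split=> [|n g y]; first exact: supp_le_tadd.
rewrite geq_max => /andP[an bn] g_s; rewrite diffop_tadd p1 // q1 // -lie_derivDl.
by apply: eq_lie_deriv => z k; rewrite /coord_field diffop_tadd.
Qed.

Lemma first_order_tscale c p : first_order p -> first_order (tscale c p).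
Proof.
move=> [a [pa p1]]; exists a; split=> [|n g y an g_s]; first exact: supp_le_tscale.
rewrite diffop_tscale p1 // -lie_derivZl.
by apply: eq_lie_deriv => z k; rewrite /coord_field diffop_tscale.
Qed.

Lemma first_order_tbracket p q : first_order p -> first_order q -> first_order (tbracket p q).
Proof.
move=> [a [pa p1]] [b [qb q1]]; exists (a + b)%N; split=> [|n g y abn g_s].
  exact: supp_le_tbracket.
have commute h z : smooth_Re h ->
    diffop n (tbracket p q) h z = diffop a p (diffop b q h) z - diffop b q (diffop a p h) z.
  move=> h_s; rewrite diffop_tbracket (diffop_tmul _ h_s pa qb abn).
  by rewrite (diffop_tmul _ h_s qb pa) // addnC.
have P h : smooth_Re h -> diffop a p h = lie_deriv (coord_field a p) h.
  by move=> h_s; apply: functional_extensionality => z; apply: p1.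
have Q h : smooth_Re h -> diffop b q h = lie_deriv (coord_field b q) h.
  by move=> h_s; apply: functional_extensionality => z; apply: q1.
rewrite commute // (P _ (smooth_Re_diffop b q g_s)) (Q _ (smooth_Re_diffop a p g_s)).
rewrite (P g g_s) (Q g g_s) lie_deriv_commutator //; try exact: smooth_field_coord_field.
apply: eq_lie_deriv => z k; have k_s := @smooth_Re_coord e k.
rewrite /coord_field commute //.
by rewrite (P _ (smooth_Re_diffop b q k_s)) (Q _ (smooth_Re_diffop a p k_s)).
Qed.

Lemma lie_first_order p : is_lie p -> first_order p.
Proof.
elim=> {p} [i|p q _ ? _ ?|c p _ ?|p q _ ? _ ?|p q pq _ [a [pa p1]]].
- exact: first_order_letter.
- exact: first_order_tadd.
- exact: first_order_tscale.
- exact: first_order_tbracket.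
exists a; split=> [|n g y an g_s]; first exact: eq_supp_le pa.
rewrite -(eq_diffop _ _ _ pq) p1 //; apply: eq_lie_deriv => z k.
exact: eq_diffop.
Qed.

Lemma diffop_lie n p g y : is_lie p -> supp_le n p -> smooth_Re g ->
  diffop n p g y = lie_deriv (coord_field n p) g y.
Proof.
move=> /lie_first_order[a [pa p1]] pn g_s.
have widen h z : diffop n p h z = diffop (maxn a n) p h z.
  by apply: diffop_supp => //; apply: supp_le_widen pn (leq_maxr _ _).
rewrite widen p1 ?leq_maxl //; apply: eq_lie_deriv => z k.
by rewrite /coord_field widen.
Qed.
End DifferentialOperators.

Section TranslatedFields.
Variables (d e : nat) (f : 'I_d -> VF e) (v : 'I_d -> tensor d) (N' : nat).
Hypothesis f_s : forall i, smooth_field (f i).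
Hypothesis v_lie : forall i, is_lie (v i).
Hypothesis v_supp : forall i, supp_le N' (v i).
Hypothesis N'_gt0 : (0 < N')%N.

Lemma fpoly_diffop (g : 'I_d -> VF e) n x y j : fpoly g n x y j = diffop g n x (fun z => z j) y.
Proof. by apply: eq_Rsum => u; rewrite fw_diffop_word. Qed.

Lemma smooth_field_fv i : smooth_field (fv f v N' i).
Proof.
move=> j; rewrite /fv; under [fun y => _]functional_extensionality => y do rewrite fpoly_diffop.
by apply/smooth_Re_add/smooth_Re_diffop/smooth_Re_coord; apply: f_s.
Qed.

Lemma diffop_translate_word w g y : smooth_Re g ->
  diffop f (size w * N') (translate_word v w) g y = diffop_word (fv f v N') w g y.
Proof.
elim: w g y => [|i w IH] g y g_s /=; first exact: diffop_tone.
rewrite mulSn (diffop_tmul f_s _ g_s (supp_le_translated_letter v_supp N'_gt0 i)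
  (supp_le_translate_word v_supp N'_gt0 (w := w)) (leqnn _)).
have -> : diffop f (size w * N') (translate_word v w) g = diffop_word (fv f v N') w g.
  by apply: functional_extensionality => z; apply: IH.
have w_s := smooth_Re_diffop_word smooth_field_fv w g_s.
rewrite diffop_tadd diffop_letter N'_gt0 (diffop_lie f_s _ (v_lie i) (v_supp i) w_s).
by rewrite -lie_derivDl; apply: eq_lie_deriv => z k; rewrite /fv fpoly_diffop.
Qed.

Lemma fpoly_translate K1 K2 x y j : supp_le K2 x -> supp_le K1 (translate_t v x) ->
  fpoly f K1 (translate_t v x) y j = fpoly (fv f v N') K2 x y j.
Proof.
move=> xK2 TxK1; set B := maxn K1 (K2 * N').
rewrite /fpoly -(@Rsum_words_upto_supp _ K1 B); first last.
- by move=> u K1u; rewrite TxK1 // Rmult_0_l.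
- exact: leq_maxl.
rewrite (@eq_Rsum _ _ _ (fun u => Rsum (words_upto d K2)
           (fun w => x w * (translate_word v w u * fw f u y j)))) => [|u]; last first.
  by rewrite (translate_tE v_lie u xK2) -Rsum_distrl; apply: eq_Rsum => w; lra.
rewrite exchange_Rsum; apply: eq_Rsum_seq => w wK2; rewrite Rsum_distrr.
have wB : (size w * N' <= B)%N.
  by apply: leq_trans (leq_maxr _ _); rewrite leq_mul2r (size_words_upto wK2) orbT.
have w_supp := supp_le_translate_word v_supp N'_gt0 (w := w).
rewrite -[Rsum _ _]/(fpoly f B (translate_word v w) y j) fpoly_diffop.
rewrite (diffop_supp _ _ _ (supp_le_widen w_supp wB) w_supp).
by rewrite diffop_translate_word ?fw_diffop_word //; apply: smooth_Re_coord.
Qed.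
End TranslatedFields.

(** * Derivatives on [0, T] and controlled equations *)

Section DerivativeWithin.
Variable T : R.
Hypothesis T_gt0 : 0 < T.
Implicit Types (g : R -> R) (s l : R).

Lemma in0T_near s del : in0T T s -> 0 < del -> exists t, [/\ in0T T t, t <> s & Rabs (t - s) < del].
Proof.
move=> [s_ge0 s_leT] del_gt0; pose m := Rmin del T.
have [m_gt0 m_del m_T] : [/\ 0 < m, m <= del & m <= T].
  by split; [apply: Rmin_pos | apply: Rmin_l | apply: Rmin_r].
case: (Rle_dec (s + m / 2) T) => [right_in|right_out].
  by exists (s + m / 2); split; [rewrite /in0T; lra | lra | rewrite Rabs_right; lra].
by exists (s - m / 2); split; [rewrite /in0T; lra | lra | rewrite Rabs_left; lra].
Qed.

Lemma deriv_within_unique g s l1 l2 : in0T T s ->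
  deriv_within T g s l1 -> deriv_within T g s l2 -> l1 = l2.
Proof.
move=> s_in g_l1 g_l2; apply: NNPP => l12.
have eps_gt0 : 0 < Rabs (l1 - l2) / 2 by have := Rabs_pos_lt (l1 - l2) ltac:(lra); lra.
have [d1 [d1_gt0 D1]] := g_l1 _ eps_gt0; have [d2 [d2_gt0 D2]] := g_l2 _ eps_gt0.
have [t [t_in ts tsd]] := in0T_near s_in (Rmin_pos _ _ d1_gt0 d2_gt0).
have := D1 t t_in ts ltac:(have := Rmin_l d1 d2; lra).
have := D2 t t_in ts ltac:(have := Rmin_r d1 d2; lra).
have := Rabs_triang ((g t - g s) / (t - s) - l2) (- ((g t - g s) / (t - s) - l1)).
rewrite Rabs_Ropp; have -> : (g t - g s) / (t - s) - l2 + - ((g t - g s) / (t - s) - l1) = l1 - l2.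
  by ring.
lra.
Qed.

Lemma eq_deriv_within g1 g2 s l : (forall t, in0T T t -> g1 t = g2 t) -> in0T T s ->
  deriv_within T g1 s l -> deriv_within T g2 s l.
Proof.
move=> g12 s_in g1_l eps eps_gt0; have [del [del_gt0 D]] := g1_l eps eps_gt0.
by exists del; split=> // t t_in ts tsd; rewrite -!g12 //; apply: D.
Qed.

Lemma deriv_within_const c s : deriv_within T (fun _ => c) s 0.
Proof.
move=> eps eps_gt0; exists 1; split=> [|t _ ts _]; first lra.
by rewrite Rminus_eq_0 /Rdiv Rmult_0_l Rminus_0_r Rabs_R0.
Qed.

Lemma deriv_withinD g1 g2 s l1 l2 : deriv_within T g1 s l1 -> deriv_within T g2 s l2 ->
  deriv_within T (fun t => g1 t + g2 t) s (l1 + l2).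
Proof.
move=> g1_l g2_l eps eps_gt0.
have [d1 [d1_gt0 D1]] := g1_l (eps / 2) ltac:(lra).
have [d2 [d2_gt0 D2]] := g2_l (eps / 2) ltac:(lra).
exists (Rmin d1 d2); split=> [|t t_in ts tsd]; first exact: Rmin_pos.
have := D1 t t_in ts ltac:(have := Rmin_l d1 d2; lra).
have := D2 t t_in ts ltac:(have := Rmin_r d1 d2; lra).
have := Rabs_triang ((g1 t - g1 s) / (t - s) - l1) ((g2 t - g2 s) / (t - s) - l2).
have -> : (g1 t + g2 t - (g1 s + g2 s)) / (t - s) - (l1 + l2) =
          (g1 t - g1 s) / (t - s) - l1 + ((g2 t - g2 s) / (t - s) - l2).
  by field; lra.
lra.
Qed.

Lemma deriv_withinZ c g s l : deriv_within T g s l -> deriv_within T (fun t => g t * c) s (l * c).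
Proof.
move=> g_l eps eps_gt0; have c1_gt0 : 0 < Rabs c + 1 by have := Rabs_pos c; lra.
have [del [del_gt0 D]] := g_l (eps / (Rabs c + 1)) ltac:(exact: Rdiv_lt_0_compat).
exists del; split=> // t t_in ts tsd; have := D t t_in ts tsd.
have -> : (g t * c - g s * c) / (t - s) - l * c = ((g t - g s) / (t - s) - l) * c by field; lra.
have E : eps / (Rabs c + 1) * (Rabs c + 1) = eps by field; lra.
rewrite Rabs_mult; have := Rabs_pos c; have := Rabs_pos ((g t - g s) / (t - s) - l); nra.
Qed.

Lemma deriv_within_lincomb A (r : seq A) (G : A -> R -> R) (L c : A -> R) s :
  (forall a, deriv_within T (G a) s (L a)) ->
  deriv_within T (fun t => Rsum r (fun a => G a t * c a)) s (Rsum r (fun a => L a * c a)).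
Proof.
move=> G_L; elim: r => [|a r IH]; first exact: deriv_within_const.
exact: deriv_withinD (deriv_withinZ _ (G_L a)) IH.
Qed.

Lemma smooth_on_deriv_within g s : smooth_on T g -> in0T T s -> exists l, deriv_within T g s l.
Proof.
move=> [G [G_d Gg]] s_in; have /is_derive_Reals G' := Derive_correct _ _ (G_d 1%N s).
exists (Derive G s) => eps eps_gt0; have [del D] := G' eps eps_gt0.
exists del; split=> [|t t_in ts tsd]; first exact: cond_pos.
have := D (t - s) ltac:(lra) tsd; rewrite -!Gg //.
by have -> : s + (t - s) = t by ring.
Qed.
End DerivativeWithin.

Section DiagonalDerivative.
Variables (T : R) (d : nat).
Hypothesis T_gt0 : 0 < T.
Implicit Types (X W : twopar d) (D : tensor d).

Lemma diag_deriv_unique X s D1 D2 : in0T T s ->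
  is_diag_deriv T X s D1 -> is_diag_deriv T X s D2 -> D1 = D2.
Proof.
move=> s_in D1X D2X; apply: functional_extensionality => w.
exact: (deriv_within_unique T_gt0 s_in (D1X w) (D2X w)).
Qed.

Lemma sgrm_diag_deriv X :
  is_sgrm T X -> exists Dx, forall s, in0T T s -> is_diag_deriv T X s (Dx s).
Proof.
move=> [_ [_ [_ X_s]]].
pose deriv_at (sw : R * seq 'I_d) l :=
  in0T T sw.1 -> deriv_within T (fun t => X sw.1 t sw.2) sw.1 l.
have [Dx Dx_spec] : exists Dx, forall sw, deriv_at sw (Dx sw).
  apply: functional_choice => -[s w]; case: (classic (in0T T s)) => [s_in|s_out]; last by exists 0.
  by have [l X_l] := smooth_on_deriv_within (X_s s w s_in) s_in; exists l.
by exists (fun s w => Dx (s, w)) => s s_in w; apply: (Dx_spec (s, w)).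
Qed.

Lemma diag_deriv_translate (v : 'I_d -> tensor d) X s D :
  is_diag_deriv T X s D -> is_diag_deriv T (translate v X) s (translate_t v D).
Proof. by move=> DX u; apply: deriv_within_lincomb => w; apply: DX. Qed.

Lemma diag_deriv_calT (v : 'I_d -> tensor d) M X s D : supp_le M (translate_t v D) ->
  is_diag_deriv T X s D -> is_diag_deriv T (calT v M X) s (translate_t v D).
Proof.
move=> TD_M DX u; rewrite /calT /tproj; case: leqP => [_|Mu].
  exact: diag_deriv_translate.
by rewrite TD_M //; apply: deriv_within_const.
Qed.

Lemma MinExt_diag_deriv N W X s D : is_Nsgrm T N W -> is_MinExt T N W X -> in0T T s ->
  is_diag_deriv T X s D -> is_diag_deriv T W s D.
Proof.
move=> [W_N _] [_ [XW X_LN]] s_in DX w; case: (leqP (size w) N) => [wN|Nw].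
  by apply: (eq_deriv_within (g1 := fun t => X s t w)) (DX w) => // t t_in; apply: XW.
rewrite (in_LN_supp (X_LN s D s_in DX)) //.
by apply: (eq_deriv_within (g1 := fun _ => 0)) (deriv_within_const _ _ _) => // t t_in; rewrite W_N.
Qed.
End DiagonalDerivative.

Section Solutions.
Variables (T : R) (d e : nat).
Hypothesis T_gt0 : 0 < T.
Implicit Types (g : 'I_d -> VF e) (X : twopar d) (Y : R -> point e) (Dx : R -> tensor d).

Definition solves_along K g Dx Y :=
  (forall j, smooth_on T (fun t => Y t j)) /\
  forall s j, in0T T s -> deriv_within T (fun t => Y t j) s (fpoly g K (Dx s) (Y s) j).

Lemma eq_solves_along K1 K2 g1 g2 D1 D2 Y :
  (forall s y j, in0T T s -> fpoly g1 K1 (D1 s) y j = fpoly g2 K2 (D2 s) y j) ->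
  solves_along K1 g1 D1 Y <-> solves_along K2 g2 D2 Y.
Proof.
move=> fpoly12; split=> -[Y_s Y_d]; split=> // s j s_in.
  by rewrite -fpoly12 //; apply: Y_d.
by rewrite fpoly12 //; apply: Y_d.
Qed.

Lemma solves_KE K g X Y Dx : (forall s, in0T T s -> is_diag_deriv T X s (Dx s)) ->
  solves_K T K g X Y <-> solves_along K g Dx Y.
Proof.
have fpolyE D y j : Rsum (words_upto d K) (fun w => fw g w y j * D w) = fpoly g K D y j.
  by apply: eq_Rsum => w; rewrite Rmult_comm.
move=> Dx_X; split=> -[Y_s Y_d]; split=> // s.
  move=> j s_in; have [D [DX Y_D]] := Y_d s s_in.
  by rewrite -(diag_deriv_unique T_gt0 s_in DX (Dx_X s s_in)) -fpolyE.
by move=> s_in; exists (Dx s); split=> [|j]; [apply: Dx_X | rewrite fpolyE; apply: Y_d].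
Qed.

Lemma solves_goodE g X Y Dx : (forall s, in0T T s -> is_diag_deriv T X s (Dx s)) ->
  solves_good T g X Y <->
  exists K, (forall s, in0T T s -> in_LN K (Dx s)) /\ solves_along K g Dx Y.
Proof.
move=> Dx_X; split=> -[K [K_LN sol]]; exists K; split.
- by move=> s s_in; apply: K_LN (Dx_X s s_in).
- by rewrite -(solves_KE _ _ _ Dx_X).
- by move=> s D s_in DX; rewrite (diag_deriv_unique T_gt0 s_in DX (Dx_X s s_in)); apply: K_LN.
- by rewrite (solves_KE _ _ _ Dx_X).
Qed.
End Solutions.

Section TranslatedEquations.
Variables (T : R) (d e : nat) (f : 'I_d -> VF e) (v : 'I_d -> tensor d) (N' : nat).
Hypothesis T_gt0 : 0 < T.
Hypothesis d_gt0 : (0 < d)%N.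
Hypothesis f_s : forall i, smooth_field (f i).
Hypothesis v_lie : forall i, is_lie (v i).
Hypothesis v_supp : forall i, supp_le N' (v i).
Hypothesis N'_gt0 : (0 < N')%N.

Let fpoly_T := fpoly_translate f_s v_lie v_supp N'_gt0.

Lemma solves_good_translate X Y : is_good_sgrm T X ->
  solves_good T f (translate v X) Y <-> solves_good T (fv f v N') X Y.
Proof.
move=> [N [W [_ [X_sgrm [_ X_LN]]]]]; have [Dx Dx_X] := sgrm_diag_deriv X_sgrm.
rewrite (solves_goodE T_gt0 _ _ (fun s s_in => diag_deriv_translate v (Dx_X s s_in))).
rewrite (solves_goodE T_gt0 _ _ Dx_X); split=> -[K [K_LN sol]].
- have Dx_N s (s_in : in0T T s) := X_LN s _ s_in (Dx_X s s_in).
  exists N; split=> //; apply: (iffLR (eq_solves_along Y _)) sol => s y j s_in.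
  exact: fpoly_T (in_LN_supp (Dx_N s s_in)) (in_LN_supp (K_LN s s_in)).
- exists (K * N')%N; split=> [s s_in|]; first exact: translate_in_LN d_gt0 (K_LN s s_in).
  apply: (iffLR (eq_solves_along Y _)) sol => s y j s_in; have Dx_K := in_LN_supp (K_LN s s_in).
  by symmetry; apply: fpoly_T Dx_K (supp_le_translate v_lie v_supp N'_gt0 Dx_K).
Qed.

Lemma solves_K_calT N W X Y : is_Nsgrm T N W -> is_MinExt T N W X ->
  solves_K T (N * N') f (calT v (N * N') X) Y <-> solves_K T N (fv f v N') W Y.
Proof.
move=> W_N X_min; have [Dx Dx_X] := sgrm_diag_deriv X_min.1.
have Dx_N s (s_in : in0T T s) := in_LN_supp (X_min.2.2 s _ s_in (Dx_X s s_in)).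
have TDx_N s (s_in : in0T T s) := supp_le_translate v_lie v_supp N'_gt0 (Dx_N s s_in).
rewrite (solves_KE T_gt0 _ _ _ (fun s s_in => diag_deriv_calT (TDx_N s s_in) (Dx_X s s_in))).
rewrite (solves_KE T_gt0 _ _ _ (fun s s_in => MinExt_diag_deriv W_N X_min s_in (Dx_X s s_in))).
by apply: eq_solves_along => s y j s_in; apply: fpoly_T (Dx_N s s_in) (TDx_N s s_in).
Qed.
End TranslatedEquations.

Lemma smooth_bdd_field_smooth e (g : VF e) : smooth_bdd_field g -> smooth_field g.
Proof. by move=> g_s j l; have [? [? _]] := g_s l j. Qed.

Unset Implicit Arguments.
Theorem theorem2p26 (T : R) (d e : nat) (HT : 0 < T)
  (Hd : (1 <= d)%N) (He : (1 <= e)%N)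
  (f : 'I_d -> VF e) (Hf : forall i, smooth_bdd_field (f i))
  (v : 'I_d -> tensor d) (Hv : forall i, is_lie (v i))
  (N' : nat) (HN'1 : (1 <= N')%N) (HN' : forall i, in_LN N' (v i))
  (HN'min : forall n : nat, (1 <= n)%N -> (forall i, in_LN n (v i)) -> (N' <= n)%N) :
  (forall X : twopar d, is_good_sgrm T X ->
     forall Y : R -> point e,
       solves_good T f (translate v X) Y <-> solves_good T (fv f v N') X Y) /\
  (forall (N : nat) (W : twopar d), is_Nsgrm T N W ->
     forall Xm : twopar d, is_MinExt T N W Xm ->
     forall Y : R -> point e,
       solves_K T (N * N') f (calT v (N * N') Xm) Y <-> solves_K T N (fv f v N') W Y).
Proof.
have f_s i := smooth_bdd_field_smooth (Hf i).
have v_supp i := in_LN_supp (HN' i).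
split=> [X X_good Y | N W W_N X X_min Y].
- exact: (solves_good_translate HT Hd f_s Hv v_supp HN'1 Y X_good).
- exact: (solves_K_calT HT f_s Hv v_supp HN'1 Y W_N X_min).
Qed.
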